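(* For any graph $G$ of order $n$ and maximum degree $\Delta=\Delta(G)\ge 2$, $$\left\lceil \frac{2n}{\Delta}\right\rceil\le \gamma_{qtR}(G)\le n-\Delta(G)+2.$$
   Context: All graphs are finite, simple and undirected. For $f:V(G)\to\{0,1,2\}$ write $V_i=\{v:f(v)=i\}$; weight $\omega(f)=|V_1|+2|V_2|$. A quasi-total Roman dominating function (QTRDF) is an $f$ such that every vertex labeled $0$ is adjacent to a vertex labeled $2$, and every vertex isolated in the subgraph induced by $V_1\cup V_2$ has label $1$; $\gamma_{qtR}(G)$ is the minimum weight of a QTRDF. *)

From mathcomp Require Import all_boot all_order.
Set Implicit Arguments. Unset Strict Implicit. Unset Printing Implicit Defensive.

(* A finite simple graph: vertex type T : finType, adjacency e : rel T,
   required (in the theorem) to be symmetric and irreflexive. *)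

Definition neighbours (T : finType) (e : rel T) (x : T) : {set T} :=
  [set y | e x y].

Definition deg (T : finType) (e : rel T) (x : T) : nat := #|neighbours e x|.

(* maximum degree Delta(G) (0 for the empty graph) *)
Definition maxdeg (T : finType) (e : rel T) : nat := \max_(x : T) deg e x.

Definition weight (T : finType) (f : {ffun T -> 'I_3}) : nat :=
  \sum_(v : T) (f v : nat).

Definition is_qtrdf (T : finType) (e : rel T) (f : {ffun T -> 'I_3}) : bool :=
  [forall v, ((f v : nat) == 0) ==> [exists u, e v u && ((f u : nat) == 2)]]
  && [forall v, (((f v : nat) != 0) && [forall u, e v u ==> ((f u : nat) == 0)])
                 ==> ((f v : nat) == 1)].

(* gamma_qtR(G): minimum weight of a QTRDF.  The constant function 1 is always
   a QTRDF of weight |V| <= 2|V|, so the default 2|V| never matters. *)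
Definition gamma_qtR (T : finType) (e : rel T) : nat :=
  \big[minn/(#|T|).*2]_(f : {ffun T -> 'I_3} | is_qtrdf e f) weight f.

From mathcomp Require Import all_boot all_order.
From mathcomp Require Import zify.
Import Order.TTheory.

Set Implicit Arguments.
Unset Strict Implicit.
Unset Printing Implicit Defensive.

(* Lower bound: every vertex labelled 0 has a neighbour labelled 2, and a
   vertex labelled 2 is not isolated in V1 u V2, so it has at most Delta - 1
   neighbours labelled 0.  Hence |V0| <= (Delta - 1) |V2| and
   2n = 2(|V0| + |V1| + |V2|) <= Delta (|V1| + 2|V2|).
   Upper bound: label a vertex x of maximum degree 2, all its neighbours but
   one 0, and every other vertex 1. *)

Lemma sum_nat_mem (T : finType) (A : {set T}) : \sum_v (v \in A : nat) = #|A|.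
Proof. by rewrite -sum1_card [RHS]big_mkcond; apply: eq_bigr => v _; case: (v \in A). Qed.

Lemma card_le_sum_card_rel (I J : finType) (r : I -> J -> bool)
    (X : {set I}) (Y : {set J}) :
  {in X, forall x, exists2 y, y \in Y & r x y} ->
  #|X| <= \sum_(y in Y) #|[set x in X | r x y]|.
Proof.
move=> covX; rewrite -sum1_card.
under [X in _ <= X]eq_bigr => y _ do rewrite -sum1dep_card big_mkcondr.
rewrite exchange_big /=; apply: leq_sum => x /covX [y Yy rxy].
by rewrite (bigD1 y) //= rxy.
Qed.

Lemma ceil_divn_leq a b d : 0 < d -> a <= d * b -> (a + d - 1) %/ d <= b.
Proof. by move=> d_gt0 le_ab; rewrite -ltnS ltn_divLR //; lia. Qed.

Section QuasiTotalRomanDomination.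

Variables (T : finType) (e : rel T).
Hypotheses (e_sym : symmetric e) (e_irr : irreflexive e).

Lemma deg_le_maxdeg x : deg e x <= maxdeg e.
Proof. exact: (@leq_bigmax _ (deg e) x). Qed.

Lemma maxdeg_attained : 0 < maxdeg e -> exists x, deg e x = maxdeg e.
Proof.
move=> maxdeg_gt0; have [x _|T0] := pickP (@predT T).
  have T_gt0 : 0 < #|T| by apply/card_gt0P; exists x.
  by have [z maxE] := bigop.eq_bigmax (deg e) T_gt0; exists z; rewrite /maxdeg maxE.
by move: maxdeg_gt0; rewrite /maxdeg big_pred0.
Qed.

Lemma gamma_qtR_le_weight f : is_qtrdf e f -> gamma_qtR e <= weight f.
Proof. by move=> qf; rewrite /gamma_qtR -minEnat -leEnat; apply: bigmin_le_cond. Qed.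

Lemma gamma_qtR_ge m :
  m <= #|T|.*2 -> (forall f, is_qtrdf e f -> m <= weight f) -> m <= gamma_qtR e.
Proof. by move=> m_le lb; rewrite /gamma_qtR -minEnat -leEnat; apply: le_bigmin. Qed.

Definition labelled (f : {ffun T -> 'I_3}) (i : nat) : {set T} :=
  [set v | f v == i :> nat].

Lemma card_labelled f :
  #|T| = #|labelled f 0| + #|labelled f 1| + #|labelled f 2|.
Proof.
rewrite -!sum_nat_mem -sum1_card -!big_split; apply: eq_bigr => v _.
by rewrite !inE; case: (f v) => [[|[|[|k]]] //=].
Qed.

Lemma weight_labelled f : weight f = #|labelled f 1| + #|labelled f 2|.*2.
Proof.
rewrite /weight -!sum_nat_mem -muln2 big_distrl -big_split; apply: eq_bigr => v _.
by rewrite !inE; case: (f v) => [[|[|[|k]]] //=].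
Qed.

Section QTRDF.

Variable f : {ffun T -> 'I_3}.
Hypothesis qf : is_qtrdf e f.

Lemma qtrdf_label0_nbr v :
  v \in labelled f 0 -> exists2 u, u \in labelled f 2 & e v u.
Proof.
case/andP: qf => /forallP/(_ v) + _; rewrite inE => /implyP dom /dom.
by case/existsP => u /andP [evu fu2]; exists u; rewrite ?inE.
Qed.

Lemma qtrdf_label2_nbr u :
  u \in labelled f 2 -> exists2 w, e u w & w \notin labelled f 0.
Proof.
rewrite inE => /eqP fu2; case/andP: qf => _ /forallP/(_ u)/implyP.
rewrite fu2 /= => not_isolated.
have /forallPn [w] : ~~ [forall w, e u w ==> ((f w : nat) == 0)].
  by apply/negP => /not_isolated.
by rewrite negb_imply => /andP [euw fw0]; exists w; rewrite ?inE.
Qed.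

Lemma qtrdf_card_label0_nbr u :
  u \in labelled f 2 -> #|[set v in labelled f 0 | e v u]| <= (maxdeg e).-1.
Proof.
case/qtrdf_label2_nbr => w euw fw0.
have sub : [set v in labelled f 0 | e v u] \subset neighbours e u :\ w.
  apply/subsetP => v; rewrite !inE => /andP [fv0 evu].
  by rewrite e_sym evu andbT; apply: contraTneq fv0 => ->; rewrite inE in fw0.
have := cardsD1 w (neighbours e u); rewrite inE euw -/(deg e u).
have := deg_le_maxdeg u; have := subset_leq_card sub; lia.
Qed.

Lemma qtrdf_card_label0 :
  #|labelled f 0| <= #|labelled f 2| * (maxdeg e).-1.
Proof.
apply: leq_trans (card_le_sum_card_rel qtrdf_label0_nbr) _.
by rewrite -sum_nat_const; apply: leq_sum => u; apply: qtrdf_card_label0_nbr.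
Qed.

Lemma qtrdf_weight_lb : 2 <= maxdeg e -> #|T|.*2 <= maxdeg e * weight f.
Proof.
move=> maxdeg_ge2; have := qtrdf_card_label0.
rewrite (card_labelled f) weight_labelled; nia.
Qed.

End QTRDF.

Definition star_labelling (x y : T) : {ffun T -> 'I_3} :=
  [ffun v => inord (if v == x then 2 else if e x v && (v != y) then 0 else 1)].

Lemma star_labellingE x y v : (star_labelling x y v : nat) =
  if v == x then 2 else if e x v && (v != y) then 0 else 1.
Proof. by rewrite ffunE inordK; case: ifP => // _; case: ifP. Qed.

Lemma star_labelling_qtrdf x y : e x y -> is_qtrdf e (star_labelling x y).
Proof.
move=> exy; have y_neq_x : y != x by apply: contraTneq exy => ->; rewrite e_irr.
apply/andP; split; apply/forallP => v; apply/implyP; rewrite !star_labellingE.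
  case: (eqVneq v x) => // _; case: ifP => // /andP [exv _] _.
  by apply/existsP; exists x; rewrite e_sym exv star_labellingE eqxx.
case: (eqVneq v x) => [->|_]; last by case: ifP.
case/andP=> _ /forallP/(_ y)/implyP/(_ exy).
by rewrite star_labellingE (negbTE y_neq_x) exy eqxx.
Qed.

Lemma weight_star_labelling x y :
  e x y -> weight (star_labelling x y) = #|T| - deg e x + 2.
Proof.
move=> exy.
have : weight (star_labelling x y) + #|neighbours e x :\ y| = #|T| + #|[set x]|.
  rewrite /weight -!sum_nat_mem -sum1_card -!big_split; apply: eq_bigr => v _ /=.
  rewrite star_labellingE !inE.
  by case: (eqVneq v x) => [->|_]; [rewrite e_irr andbF | case: (e x v); case: (v == y)].
(* deg e x <= #|T| keeps the truncated subtraction exact. *)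
rewrite cards1; have := max_card (neighbours e x).
have := cardsD1 y (neighbours e x); rewrite inE exy -/(deg e x); lia.
Qed.

End QuasiTotalRomanDomination.

Theorem mainTheorem6 (T : finType) (e : rel T)
  (e_sym : symmetric e) (e_irr : irreflexive e) :
  2 <= maxdeg e ->
  (#|T|.*2 + maxdeg e - 1) %/ maxdeg e <= gamma_qtR e /\
  gamma_qtR e <= #|T| - maxdeg e + 2.
Proof.
move=> maxdeg_ge2; have maxdeg_gt0 : 0 < maxdeg e by lia.
split.
  apply: gamma_qtR_ge => [|f qf]; apply: ceil_divn_leq => //.
    by rewrite leq_pmull.
  exact: qtrdf_weight_lb.
have [x deg_x] := maxdeg_attained maxdeg_gt0.
have [y] : exists y, y \in neighbours e x by apply/card_gt0P; rewrite -/(deg e x) deg_x.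
rewrite inE => exy.
rewrite -deg_x -(weight_star_labelling e_irr exy).
exact/gamma_qtR_le_weight/star_labelling_qtrdf.
Qed.
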